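(* Fix positive numbers $l^0_{ij},l^0_{jk},l^0_{ki}$ and let $W^\diamond=\{(w_i,w_j,w_k)\in\mathbb{R}^3: w_r+w_s>-\ln\cosh\frac{l^0_{rs}}{2}\text{ for all }\{r,s\}\subset\{i,j,k\}\}$. For $(w_i,w_j,w_k)\in W^\diamond$ define $l_{ij},l_{jk},l_{ki}>0$ by $\cosh\frac{l_{rs}}{2}=e^{w_r+w_s}\cosh\frac{l^0_{rs}}{2}$, and let $\theta_i,\theta_j,\theta_k$ be the lengths of the sides opposite to the sides of lengths $l_{jk},l_{ki},l_{ij}$, respectively, in the right-angled hyperbolic hexagon whose three pairwise non-adjacent sides have lengths $l_{ij},l_{jk},l_{ki}$. Then the Jacobian matrix $\frac{\partial(\theta_i,\theta_j,\theta_k)}{\partial(w_i,w_j,w_k)}$ is symmetric, strictly diagonally dominant (i.e. for each row $r$, $|\partial\theta_r/\partial w_r|>\sum_{s\ne r}|\partial\theta_r/\partial w_s|$), and negative definite on $W^\diamond$.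
   Context: In a right-angled hyperbolic hexagon with pairwise non-adjacent sides of lengths $l_{ij},l_{jk},l_{ki}$, the opposite side lengths satisfy the cosine law $\cosh\theta_i=\frac{\cosh l_{jk}+\cosh l_{ki}\cosh l_{ij}}{\sinh l_{ki}\sinh l_{ij}}$ (and cyclically), and the sine law $\frac{\sinh\theta_i}{\sinh l_{jk}}=\frac{\sinh\theta_j}{\sinh l_{ki}}=\frac{\sinh\theta_k}{\sinh l_{ij}}$. *)

From Stdlib Require Import Reals.
From Coquelicot Require Import Coquelicot.
Open Scope R_scope.

(* The three vertices i, j, k of the triangle / the three pairwise
   non-adjacent sides of the right-angled hexagon. *)
Inductive vtx := vi | vj | vk.

Definition vtx_eqb (r s : vtx) : bool :=
  match r, s with
  | vi, vi | vj, vj | vk, vk => true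
  | _, _ => false
  end.

Definition nxt (r : vtx) : vtx := match r with vi => vj | vj => vk | vk => vi end.
Definition prv (r : vtx) : vtx := match r with vi => vk | vj => vi | vk => vj end.

Definition sum3 (f : vtx -> R) : R := f vi + f vj + f vk.

Definition arcosh (x : R) : R := ln (x + sqrt (x * x - 1)).

Definition l0 (lij ljk lki : R) (r s : vtx) : R :=
  match r, s with
  | vi, vj | vj, vi => lij
  | vj, vk | vk, vj => ljk
  | vk, vi | vi, vk => lki
  | _, _ => 0
  end.

Definition Wdiamond (lij ljk lki : R) (w : vtx -> R) : Prop :=
  forall r s : vtx, r <> s ->
    w r + w s > - ln (cosh (l0 lij ljk lki r s / 2)).

Definition len (lij ljk lki : R) (w : vtx -> R) (r s : vtx) : R :=
  2 * arcosh (exp (w r + w s) * cosh (l0 lij ljk lki r s / 2)).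

(* theta_r : length of the side of the right-angled hexagon opposite to the
   side of length l_{st} ({r,s,t} = {i,j,k}), given by the hexagon cosine law
   cosh theta_i = (cosh l_jk + cosh l_ki cosh l_ij) / (sinh l_ki sinh l_ij). *)
Definition theta (lij ljk lki : R) (w : vtx -> R) (r : vtx) : R :=
  let l := len lij ljk lki w in
  let s := nxt r in let t := prv r in
  arcosh ((cosh (l s t) + cosh (l t r) * cosh (l r s))
          / (sinh (l t r) * sinh (l r s))).

Definition upd (w : vtx -> R) (s : vtx) (x : R) : vtx -> R :=
  fun r => if vtx_eqb r s then x else w r.

(** With [K = e^(w_r + w_s) cosh (l0_rs / 2)] one has [cosh l_rs = 2 K^2 - 1], hence
    [d (cosh l_rs) / d w_t = 2 (cosh l_rs + 1)] for [t] in [{r, s}] and [0] otherwise.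
    Differentiating the cosine law then gives the Jacobian explicitly in terms of the
    [C_rs = cosh l_rs] and the Gram determinant [D = C1^2 + C2^2 + C3^2 + 2 C1 C2 C3 - 1]:
    the diagonal entry is [-2/sqrt D ((C3 + C1 C2)/(C2 - 1) + (C2 + C1 C3)/(C3 - 1))] and
    the entry at [(r, s)] is [2/sqrt D (C_rs - 1 - C' - C'')/(C_rs - 1)], visibly symmetric.
    As [|C_rs - 1 - C' - C''| < C'' + C' C_rs] when all [C > 1], each off-diagonal entry is
    dominated by one summand of the diagonal entry, and a symmetric matrix with negative,
    strictly dominant diagonal is negative definite. *)

From Stdlib Require Import Reals Lra Psatz FunctionalExtensionality.
From Coquelicot Require Import Coquelicot.
Open Scope R_scope.

Lemma is_derive_eq (f : R -> R) (x l l' : R) : is_derive f x l -> l = l' -> is_derive f x l'.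
Proof. intros H <-; exact H. Qed.

Lemma is_derive_compR (f g : R -> R) x df dg : is_derive f (g x) df -> is_derive g x dg ->
  is_derive (fun t => f (g t)) x (dg * df).
Proof. intros; now apply (is_derive_comp f g x df dg). Qed.

Lemma is_derive_multR (f g : R -> R) x df dg : is_derive f x df -> is_derive g x dg ->
  is_derive (fun t => f t * g t) x (df * g x + f x * dg).
Proof. intros; apply (is_derive_mult f g x df dg); auto; intros; apply Rmult_comm. Qed.

Lemma is_derive_plusR (f g : R -> R) x df dg : is_derive f x df -> is_derive g x dg ->
  is_derive (fun t => f t + g t) x (df + dg).
Proof. intros; now apply (is_derive_plus f g x df dg). Qed.

Lemma is_derive_cosh (x : R) : is_derive cosh x (sinh x).
Proof. unfold cosh, sinh; auto_derive; auto; field. Qed.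

Lemma is_derive_sinh (x : R) : is_derive sinh x (cosh x).
Proof. unfold cosh, sinh; auto_derive; auto; field. Qed.

Lemma is_derive_arcosh y : 1 < y -> is_derive arcosh y (/ sqrt (y * y - 1)).
Proof.
  intro Hy; unfold arcosh.
  assert (Hs : 0 < sqrt (y * y - 1)) by (apply sqrt_lt_R0; nra).
  assert (E : y * y + - (1) = y * y - 1) by ring.
  auto_derive; rewrite ?E.
  - repeat split; nra.
  - field; lra.
Qed.

Lemma cosh_sinh_twice_arcosh (a : R) : 1 <= a ->
  cosh (2 * arcosh a) = 2 * a * a - 1 /\ sinh (2 * arcosh a) = 2 * a * sqrt (a * a - 1).
Proof.
  intro Ha; unfold arcosh, cosh, sinh.
  set (q := sqrt (a * a - 1)).
  assert (Hq : q * q = a * a - 1) by (apply sqrt_sqrt; nra).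
  assert (Hq0 : 0 <= q) by apply sqrt_pos.
  assert (E1 : exp (2 * ln (a + q)) = (a + q) * (a + q)).
  { rewrite <- Rplus_diag, exp_plus, exp_ln; lra. }
  assert (E2 : exp (- (2 * ln (a + q))) = (a - q) * (a - q)).
  { rewrite exp_Ropp, E1; field_simplify_eq; nra. }
  rewrite E1, E2; split; nra.
Qed.

Definition kron (a s : vtx) : R := if vtx_eqb a s then 1 else 0.

Lemma upd_id w s : upd w s (w s) = w.
Proof. apply functional_extensionality; intro r; unfold upd; destruct r, s; reflexivity. Qed.

Lemma is_derive_upd w s a : is_derive (fun x => upd w s x a) (w s) (kron a s).
Proof.
  unfold upd, kron; destruct (vtx_eqb a s).
  - apply (is_derive_id (K := R_AbsRing)).
  - apply (is_derive_const (K := R_AbsRing) (V := R_NormedModule)).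
Qed.

Section EdgeLength.
Variables (lij ljk lki : R) (w : vtx -> R) (a b s : vtx).
Let c := cosh (l0 lij ljk lki a b / 2).
Let K := exp (w a + w b) * c.
Let l := len lij ljk lki w a b.
Hypothesis HK : 1 < K.

Let sqrt_K_pos : 0 < sqrt (K * K - 1).
Proof. apply sqrt_lt_R0; nra. Qed.

Lemma cosh_len : cosh l = 2 * K * K - 1.
Proof. apply cosh_sinh_twice_arcosh; lra. Qed.

Lemma sinh_len : sinh l = 2 * K * sqrt (K * K - 1).
Proof. apply cosh_sinh_twice_arcosh; lra. Qed.

Lemma cosh_len_gt1 : 1 < cosh l.
Proof. rewrite cosh_len; nra. Qed.

Lemma sinh_len_gt0 : 0 < sinh l.
Proof. rewrite sinh_len; nra. Qed.

Lemma sinh_len_sqr : sinh l * sinh l = cosh l * cosh l - 1.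
Proof.
  rewrite sinh_len, cosh_len.
  assert (sqrt (K * K - 1) * sqrt (K * K - 1) = K * K - 1) by (apply sqrt_sqrt; nra).
  nra.
Qed.

Lemma is_derive_len : is_derive (fun x => len lij ljk lki (upd w s x) a b) (w s)
  (2 * ((kron a s + kron b s) * K / sqrt (K * K - 1))).
Proof.
  unfold len; apply is_derive_scal.
  eapply is_derive_eq.
  - apply (is_derive_compR arcosh (fun x => exp (upd w s x a + upd w s x b) * c)).
    + cbv beta; rewrite upd_id; now apply is_derive_arcosh.
    + apply (is_derive_multR (fun x => exp (upd w s x a + upd w s x b)) (fun _ => c)).
      * apply (is_derive_compR exp); [apply is_derive_exp|].
        apply is_derive_plusR; apply is_derive_upd.
      * apply (is_derive_const (K := R_AbsRing) (V := R_NormedModule)).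
  - cbv beta; rewrite upd_id; unfold zero; simpl; fold c K.
    unfold K, Rdiv; apply Rmult_eq_compat_r; ring.
Qed.

Lemma is_derive_cosh_len : is_derive (fun x => cosh (len lij ljk lki (upd w s x) a b)) (w s)
  ((kron a s + kron b s) * (2 * (cosh l + 1))).
Proof.
  eapply is_derive_eq.
  - apply (is_derive_compR cosh); [apply is_derive_cosh | apply is_derive_len].
  - cbv beta; rewrite upd_id; fold l; rewrite sinh_len, cosh_len; field; lra.
Qed.

Lemma is_derive_sinh_len : is_derive (fun x => sinh (len lij ljk lki (upd w s x) a b)) (w s)
  (cosh l * ((kron a s + kron b s) * (2 * (cosh l + 1))) / sinh l).
Proof.
  eapply is_derive_eq.
  - apply (is_derive_compR sinh); [apply is_derive_sinh | apply is_derive_len].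
  - cbv beta; rewrite upd_id; fold l; rewrite sinh_len, cosh_len; field; lra.
Qed.
End EdgeLength.

Definition gram (C1 C2 C3 : R) : R := C1 * C1 + C2 * C2 + C3 * C3 + 2 * C1 * C2 * C3 - 1.

Lemma gram_rot C1 C2 C3 : gram C2 C3 C1 = gram C1 C2 C3.
Proof. unfold gram; ring. Qed.

Lemma gram_pos C1 C2 C3 : 1 < C1 -> 1 < C2 -> 1 < C3 -> 0 < gram C1 C2 C3.
Proof. intros; unfold gram; assert (1 < C1 * C2) by nra; nra. Qed.

(* Derivative of [arcosh ((C1 + C2 C3) / (S2 S3))], [S = sqrt (C^2 - 1)], when the [C_i]
   move at rates [d_i]. *)
Definition cosine_law_deriv (C1 C2 C3 d1 d2 d3 : R) : R :=
  (d1 + d2 * C3 + C2 * d3 - (C1 + C2 * C3) *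
     (C2 * d2 / (C2 * C2 - 1) + C3 * d3 / (C3 * C3 - 1))) / sqrt (gram C1 C2 C3).

Lemma arcosh_cosine_law_arg_gt1 C1 C2 C3 S2 S3 :
  1 < C1 -> 1 < C2 -> 1 < C3 -> 0 < S2 -> 0 < S3 ->
  S2 * S2 = C2 * C2 - 1 -> S3 * S3 = C3 * C3 - 1 ->
  1 < (C1 + C2 * C3) / (S2 * S3).
Proof.
  intros h1 h2 h3 k2 k3 s2 s3.
  assert (HS : 0 < S2 * S3) by nra.
  assert (HCS : S2 * S3 < C2 * C3).
  { assert (E : (C2 * C3 - S2 * S3) * (C2 * C3 + S2 * S3) = C2 * C2 + C3 * C3 - 1).
    { transitivity (C2 * C2 * (C3 * C3) - (S2 * S2) * (S3 * S3)); [ring|].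
      rewrite s2, s3; ring. }
    assert (0 < C2 * C3 + S2 * S3) by nra.
    destruct (Rlt_or_le (S2 * S3) (C2 * C3)); [assumption | nra]. }
  apply (Rmult_lt_reg_r (S2 * S3)); auto.
  field_simplify; lra.
Qed.

Lemma sqrt_cosine_law_arg C1 C2 C3 S2 S3 :
  1 < C1 -> 1 < C2 -> 1 < C3 -> 0 < S2 -> 0 < S3 ->
  S2 * S2 = C2 * C2 - 1 -> S3 * S3 = C3 * C3 - 1 ->
  sqrt ((C1 + C2 * C3) / (S2 * S3) * ((C1 + C2 * C3) / (S2 * S3)) - 1)
  = sqrt (gram C1 C2 C3) / (S2 * S3).
Proof.
  intros h1 h2 h3 k2 k3 s2 s3.
  assert (HS : 0 < S2 * S3) by nra.
  replace ((C1 + C2 * C3) / (S2 * S3) * ((C1 + C2 * C3) / (S2 * S3)) - 1)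
    with (gram C1 C2 C3 / ((S2 * S3) * (S2 * S3))).
  - rewrite sqrt_div_alt, sqrt_square; nra.
  - transitivity (((C1 + C2 * C3) * (C1 + C2 * C3) - (S2 * S2) * (S3 * S3))
                    / ((S2 * S2) * (S3 * S3))).
    + replace ((S2 * S3) * (S2 * S3)) with ((S2 * S2) * (S3 * S3)) by ring.
      rewrite s2, s3; unfold gram; field; split; nra.
    + field; lra.
Qed.

Lemma is_derive_cosine_law (f1 f2 f3 g2 g3 : R -> R) (x0 d1 d2 d3 e2 e3 : R) :
  is_derive f1 x0 d1 -> is_derive f2 x0 d2 -> is_derive f3 x0 d3 ->
  is_derive g2 x0 e2 -> is_derive g3 x0 e3 ->
  1 < f1 x0 -> 1 < f2 x0 -> 1 < f3 x0 -> 0 < g2 x0 -> 0 < g3 x0 ->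
  g2 x0 * g2 x0 = f2 x0 * f2 x0 - 1 -> g3 x0 * g3 x0 = f3 x0 * f3 x0 - 1 ->
  e2 = f2 x0 * d2 / g2 x0 -> e3 = f3 x0 * d3 / g3 x0 ->
  is_derive (fun x => arcosh ((f1 x + f2 x * f3 x) / (g2 x * g3 x))) x0
    (cosine_law_deriv (f1 x0) (f2 x0) (f3 x0) d1 d2 d3).
Proof.
  intros D1 D2 D3 G2 G3 h1 h2 h3 k2 k3 s2 s3 E2 E3.
  pose proof (arcosh_cosine_law_arg_gt1 _ _ _ _ _ h1 h2 h3 k2 k3 s2 s3) as Hy.
  pose proof (sqrt_cosine_law_arg _ _ _ _ _ h1 h2 h3 k2 k3 s2 s3) as Hsq.
  assert (HsD : 0 < sqrt (gram (f1 x0) (f2 x0) (f3 x0)))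
    by (apply sqrt_lt_R0, gram_pos; auto).
  eapply is_derive_eq.
  - apply (is_derive_compR arcosh (fun x => (f1 x + f2 x * f3 x) / (g2 x * g3 x))).
    + apply is_derive_arcosh, Hy.
    + apply is_derive_div.
      * apply is_derive_plusR; [exact D1 | apply is_derive_multR; [exact D2 | exact D3]].
      * apply is_derive_multR; [exact G2 | exact G3].
      * nra.
  - unfold cosine_law_deriv; rewrite Hsq, E2, E3, <- s2, <- s3.
    field; lra.
Qed.

Definition jac_diag (C1 C2 C3 : R) : R :=
  - (2 / sqrt (gram C1 C2 C3)) * ((C3 + C1 * C2) / (C2 - 1) + (C2 + C1 * C3) / (C3 - 1)).

(* [C3] is the cosh of the edge joining the two vertices. *)
Definition jac_off (C1 C2 C3 : R) : R :=
  2 / sqrt (gram C1 C2 C3) * ((C3 - 1 - C1 - C2) / (C3 - 1)).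

Lemma Rabs_jac_off_ratio_lt a b c : 1 < a -> 1 < b -> 1 < c ->
  Rabs ((c - 1 - a - b) / (c - 1)) < (b + a * c) / (c - 1).
Proof.
  intros ha hb hc.
  rewrite Rabs_div, (Rabs_pos_eq (c - 1)) by lra.
  apply Rmult_lt_compat_r; [apply Rinv_0_lt_compat; lra|].
  apply Rabs_def1; nra.
Qed.

Section JacobianEntries.
Variables C1 C2 C3 : R.
Hypotheses (h1 : 1 < C1) (h2 : 1 < C2) (h3 : 1 < C3).

Lemma cosine_law_deriv_diag d1 d2 d3 :
  d1 = 0 -> d2 = 2 * (C2 + 1) -> d3 = 2 * (C3 + 1) ->
  cosine_law_deriv C1 C2 C3 d1 d2 d3 = jac_diag C1 C2 C3.
Proof.
  intros -> -> ->; unfold cosine_law_deriv, jac_diag.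
  assert (0 < sqrt (gram C1 C2 C3)) by (apply sqrt_lt_R0, gram_pos; auto).
  field; repeat split; try lra; apply Rgt_not_eq; nra.
Qed.

Lemma cosine_law_deriv_nxt d1 d2 d3 :
  d1 = 2 * (C1 + 1) -> d2 = 0 -> d3 = 2 * (C3 + 1) ->
  cosine_law_deriv C1 C2 C3 d1 d2 d3 = jac_off C1 C2 C3.
Proof.
  intros -> -> ->; unfold cosine_law_deriv, jac_off.
  assert (0 < sqrt (gram C1 C2 C3)) by (apply sqrt_lt_R0, gram_pos; auto).
  field; repeat split; try lra; apply Rgt_not_eq; nra.
Qed.

Lemma cosine_law_deriv_prv d1 d2 d3 :
  d1 = 2 * (C1 + 1) -> d2 = 2 * (C2 + 1) -> d3 = 0 ->
  cosine_law_deriv C1 C2 C3 d1 d2 d3 = jac_off C3 C1 C2.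
Proof.
  intros -> -> ->; unfold cosine_law_deriv, jac_off.
  rewrite (gram_rot C2 C3 C1), (gram_rot C1 C2 C3).
  assert (0 < sqrt (gram C1 C2 C3)) by (apply sqrt_lt_R0, gram_pos; auto).
  field; repeat split; try lra; apply Rgt_not_eq; nra.
Qed.

Lemma jac_diag_neg_dominant :
  jac_diag C1 C2 C3 < 0 /\
  Rabs (jac_off C1 C2 C3) + Rabs (jac_off C3 C1 C2) < Rabs (jac_diag C1 C2 C3).
Proof.
  unfold jac_diag, jac_off; rewrite (gram_rot C2 C3 C1), (gram_rot C1 C2 C3).
  set (k := 2 / sqrt (gram C1 C2 C3)).
  assert (Hk : 0 < k) by (apply Rdiv_lt_0_compat; [lra | apply sqrt_lt_R0, gram_pos; auto]).
  pose proof (Rabs_jac_off_ratio_lt C1 C2 C3 h1 h2 h3) as B1.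
  pose proof (Rabs_jac_off_ratio_lt C1 C3 C2 h1 h3 h2) as B2.
  replace (C2 - 1 - C1 - C3) with (C2 - 1 - C3 - C1) in B2 by ring.
  set (x := (C3 + C1 * C2) / (C2 - 1)) in *.
  set (y := (C2 + C1 * C3) / (C3 - 1)) in *.
  assert (Px : 0 < x) by (apply Rdiv_lt_0_compat; nra).
  assert (Py : 0 < y) by (apply Rdiv_lt_0_compat; nra).
  rewrite !Rabs_mult, Rabs_Ropp, (Rabs_pos_eq k), (Rabs_pos_eq (x + y)) by lra.
  split; nra.
Qed.
End JacobianEntries.

Lemma two_mul_le_Rabs_sqr p x y : 2 * (p * x * y) <= Rabs p * (x * x + y * y).
Proof.
  destruct (Rle_or_lt 0 p).
  - rewrite Rabs_pos_eq by lra.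
    assert (0 <= p * ((x - y) * (x - y))) by (apply Rmult_le_pos; [lra | apply Rle_0_sqr]).
    nra.
  - rewrite Rabs_left by lra.
    assert (0 <= - p * ((x + y) * (x + y))) by (apply Rmult_le_pos; [lra | apply Rle_0_sqr]).
    nra.
Qed.

Lemma sqr_mul_neg x a : a < 0 -> x * x * a <= 0 /\ (x <> 0 -> x * x * a < 0).
Proof.
  intro ha; split.
  - pose proof (Rle_0_sqr x); unfold Rsqr in *; nra.
  - intro hx; pose proof (Rsqr_pos_lt x hx); unfold Rsqr in *; nra.
Qed.

Lemma quad3_neg (a b c p q t x y z : R) :
  a + Rabs p + Rabs q < 0 -> b + Rabs p + Rabs t < 0 -> c + Rabs q + Rabs t < 0 ->
  (x <> 0 \/ y <> 0 \/ z <> 0) ->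
  x * a * x + x * p * y + x * q * z + (y * p * x + y * b * y + y * t * z)
  + (z * q * x + z * t * y + z * c * z) < 0.
Proof.
  intros ha hb hc hx.
  pose proof (two_mul_le_Rabs_sqr p x y).
  pose proof (two_mul_le_Rabs_sqr q x z).
  pose proof (two_mul_le_Rabs_sqr t y z).
  destruct (sqr_mul_neg x _ ha) as [Ax Sx].
  destruct (sqr_mul_neg y _ hb) as [Ay Sy].
  destruct (sqr_mul_neg z _ hc) as [Az Sz].
  destruct hx as [h | [h | h]];
    [specialize (Sx h) | specialize (Sy h) | specialize (Sz h)]; nra.
Qed.

Lemma neg_def_of_diag_dominant (J : vtx -> vtx -> R) :
  (forall r s, J r s = J s r) ->
  (forall r, J r r < 0) ->
  (forall r, Rabs (J r r) > Rabs (J r (nxt r)) + Rabs (J r (prv r))) ->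
  forall x : vtx -> R, (exists r, x r <> 0) ->
    sum3 (fun r => sum3 (fun s => x r * J r s * x s)) < 0.
Proof.
  intros Hsym Hneg Hdom x [r0 hr0].
  assert (Hrow : forall r, J r r + Rabs (J r (nxt r)) + Rabs (J r (prv r)) < 0).
  { intro r; specialize (Hneg r); specialize (Hdom r).
    rewrite Rabs_left in Hdom by exact Hneg; lra. }
  unfold sum3; rewrite (Hsym vj vi), (Hsym vk vj), (Hsym vi vk).
  apply quad3_neg.
  - pose proof (Hrow vi) as Ri; simpl in Ri; rewrite (Hsym vi vk) in Ri; exact Ri.
  - pose proof (Hrow vj) as Rj; simpl in Rj; rewrite (Hsym vj vi) in Rj; lra.
  - pose proof (Hrow vk) as Rk; simpl in Rk; rewrite (Hsym vk vj) in Rk; exact Rk.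
  - destruct r0; [left | right; left | right; right]; exact hr0.
Qed.

(* [A], [B], [C] stand for [cosh l_jk], [cosh l_ki], [cosh l_ij]. *)
Definition hexagon_jac (A B C : R) (r s : vtx) : R :=
  match r, s with
  | vi, vi => jac_diag A B C | vj, vj => jac_diag B C A | vk, vk => jac_diag C A B
  | vi, vj | vj, vi => jac_off A B C
  | vj, vk | vk, vj => jac_off B C A
  | vk, vi | vi, vk => jac_off C A B
  end.

Lemma hexagon_jac_sym A B C r s : hexagon_jac A B C r s = hexagon_jac A B C s r.
Proof. destruct r, s; reflexivity. Qed.

Lemma hexagon_jac_neg_dominant A B C : 1 < A -> 1 < B -> 1 < C -> forall r,
  hexagon_jac A B C r r < 0 /\
  Rabs (hexagon_jac A B C r (nxt r)) + Rabs (hexagon_jac A B C r (prv r))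
  < Rabs (hexagon_jac A B C r r).
Proof. intros hA hB hC r; destruct r; apply jac_diag_neg_dominant; assumption. Qed.

Section Hexagon.
Variables (lij ljk lki : R) (w : vtx -> R).
Hypothesis Hw : Wdiamond lij ljk lki w.

Let C (a b : vtx) : R := cosh (len lij ljk lki w a b).

Lemma Wdiamond_edge_gt1 a b :
  a <> b -> 1 < exp (w a + w b) * cosh (l0 lij ljk lki a b / 2).
Proof.
  intro hab; set (c := cosh (l0 lij ljk lki a b / 2)).
  assert (Hc : 0 < c).
  { unfold c, cosh; pose proof (exp_pos (l0 lij ljk lki a b / 2));
      pose proof (exp_pos (- (l0 lij ljk lki a b / 2))); lra. }
  pose proof (Hw a b hab) as H; fold c in H.
  apply exp_increasing in H; rewrite exp_Ropp, exp_ln in H by exact Hc.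
  apply (Rmult_lt_compat_r c) in H; [rewrite Rinv_l in H; lra | exact Hc].
Qed.

Lemma Wdiamond_cosh_len_gt1 a b : a <> b -> 1 < C a b.
Proof. intro hab; apply cosh_len_gt1, Wdiamond_edge_gt1, hab. Qed.

Lemma is_derive_theta r s :
  is_derive (fun x => theta lij ljk lki (upd w s x) r) (w s)
    (hexagon_jac (C vj vk) (C vk vi) (C vi vj) r s).
Proof.
  assert (n1 : nxt r <> prv r) by (destruct r; discriminate).
  assert (n2 : prv r <> r) by (destruct r; discriminate).
  assert (n3 : r <> nxt r) by (destruct r; discriminate).
  pose proof (Wdiamond_edge_gt1 _ _ n1) as K1.
  pose proof (Wdiamond_edge_gt1 _ _ n2) as K2.
  pose proof (Wdiamond_edge_gt1 _ _ n3) as K3.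
  eapply is_derive_eq.
  - unfold theta; cbv zeta.
    eapply (is_derive_cosine_law
      (fun x => cosh (len lij ljk lki (upd w s x) (nxt r) (prv r)))
      (fun x => cosh (len lij ljk lki (upd w s x) (prv r) r))
      (fun x => cosh (len lij ljk lki (upd w s x) r (nxt r)))
      (fun x => sinh (len lij ljk lki (upd w s x) (prv r) r))
      (fun x => sinh (len lij ljk lki (upd w s x) r (nxt r))));
      cbv beta; rewrite ?upd_id.
    1-3: apply is_derive_cosh_len; assumption.
    1-2: apply is_derive_sinh_len; assumption.
    1-3: apply cosh_len_gt1; assumption.
    1-2: apply sinh_len_gt0; assumption.
    1-2: apply sinh_len_sqr; assumption.
    1-2: reflexivity.
  - assert (h1 : 1 < C vj vk) by (apply Wdiamond_cosh_len_gt1; discriminate).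
    assert (h2 : 1 < C vk vi) by (apply Wdiamond_cosh_len_gt1; discriminate).
    assert (h3 : 1 < C vi vj) by (apply Wdiamond_cosh_len_gt1; discriminate).
    cbv beta; rewrite upd_id; fold C.
    destruct r, s; simpl;
      first [ apply cosine_law_deriv_diag | apply cosine_law_deriv_nxt
            | apply cosine_law_deriv_prv ]; auto; cbv [kron vtx_eqb C]; ring.
Qed.
End Hexagon.

Theorem lemma2p2 (lij ljk lki : R) (Hij : 0 < lij) (Hjk : 0 < ljk) (Hki : 0 < lki)
  (w : vtx -> R) (Hw : Wdiamond lij ljk lki w) :
  exists Jac : vtx -> vtx -> R,
    (forall r s : vtx,
        is_derive (fun x => theta lij ljk lki (upd w s x) r) (w s) (Jac r s)) /\
    (forall r s : vtx, Jac r s = Jac s r) /\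
    (forall r : vtx,
        Rabs (Jac r r) > Rabs (Jac r (nxt r)) + Rabs (Jac r (prv r))) /\
    (forall x : vtx -> R, (exists r, x r <> 0) ->
        sum3 (fun r => sum3 (fun s => x r * Jac r s * x s)) < 0).
Proof.
  set (C a b := cosh (len lij ljk lki w a b)).
  assert (Hgt : forall a b, a <> b -> 1 < C a b)
    by (intros a b; apply (Wdiamond_cosh_len_gt1 _ _ _ _ Hw)).
  pose proof (hexagon_jac_neg_dominant (C vj vk) (C vk vi) (C vi vj)
                (Hgt vj vk ltac:(discriminate)) (Hgt vk vi ltac:(discriminate))
                (Hgt vi vj ltac:(discriminate))) as Hrow.
  exists (hexagon_jac (C vj vk) (C vk vi) (C vi vj)); split; [|split; [|split]].
  - intros r s; apply is_derive_theta, Hw.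
  - apply hexagon_jac_sym.
  - intro r; apply Hrow.
  - apply neg_def_of_diag_dominant; [apply hexagon_jac_sym | apply Hrow | apply Hrow].
Qed.
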